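(* Let $\mathcal Y=\mathbb R^m$, $U\subset\mathbb R^m$ open, $u_0\in U$, and assume (A1), condition (B) at $u_0$, and (A2)–(A3) at $u_0$ for every unit direction $d\in\mathbb R^m$ (in place of $d(u_0)$). If $v$ is differentiable at $u_0$ and, for every $x\in S(u_0)$, $f_x$ is differentiable at $u_0$, then for each unit $d$ the map $x\mapsto D_df_x(u_0)$ is constant on $S(u_0)$, and $\nabla v(u_0)=\nabla_uf(x,u_0)$ for every $x\in S(u_0)$.
   Context: Setting: $\mathfrak X$ a real Banach space, $X\subset\mathfrak X$ nonempty, $U\subset\mathbb R^m$, $f:X\times U\to\mathbb R$, $\Phi:U\to2^X$, $v(u)=\inf_{x\in\Phi(u)}f(x,u)$, $S(u)=\{x\in\Phi(u):f(x,u)=v(u)\}$, $f_x(u)=f(x,u)$, $D_df_x(u)=\lim_{s\downarrow0}\frac{f(x,u+sd)-f(x,u)}{s}$. (A1): $f$ continuous on $X\times U$ and, for every $u\in U$, there exist $\alpha\in\mathbb R$ and compact $C\subset\mathfrak X$ with $\emptyset\ne\{x\in\Phi(u'):f(x,u')\le\alpha\}\subset C$ for all $u'$ near $u$. (A2) at $u_0$ for direction $d$: $D_df_x(u_0)$ exists for all $x\in\Phi(u_0)$ and $\inf_{x\in S(u_0)}D_df_x(u_0)>-\infty$. (A3) at $u_0$ for $d$: if $\{x_k\}\subset\Phi(u_0)$, $x_k\to x\in X$, then $D_df_x(u_0)\le\limsup_kD_df_{x_k}(u_0)$. Condition (B) at $u_0$: either $\Phi(u)\equiv\Phi$ is a fixed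 nonempty closed subset of $X$, or $\Phi(u)=\{x\in X:G(x,u)\in K\}$ with $G:X\times U\to\mathcal Z$ continuous into a topological vector space $\mathcal Z$, $K$ closed with nonempty interior, and $G(x,u_0)\in\operatorname{int}K$ for all $x\in S(u_0)$. *)

From HB Require Import structures.
From mathcomp Require Import all_boot all_order all_algebra.
From mathcomp Require Import all_classical all_reals all_analysis.
Set Implicit Arguments. Unset Strict Implicit. Unset Printing Implicit Defensive.
Import Order.TTheory GRing.Theory Num.Theory.
Import numFieldNormedType.Exports.
Local Open Scope classical_set_scope.
Local Open Scope ring_scope.

Section Defs.
Variables (R : realType) (E : completeNormedModType R) (m : nat).
Implicit Types (f : E -> 'rV[R]_m -> R) (Phi : 'rV[R]_m -> set E).

Definition optval f Phi (u : 'rV[R]_m) : \bar R :=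
  ereal_inf [set (f x u)%:E | x in Phi u].

Definition solset f Phi (u : 'rV[R]_m) : set E :=
  [set x | Phi u x /\ (f x u)%:E = optval f Phi u].

Definition diffquot f (x : E) (u d : 'rV[R]_m) : R -> R :=
  fun s => (f x (u + s *: d) - f x u) / s.

Definition dirder_ex f x u d : Prop := cvg (diffquot f x u d @ 0^'+).

Definition dirder f x u d : R := lim (diffquot f x u d @ 0^'+).

Definition unit_dir (d : 'rV[R]_m) : Prop := \sum_(i < m) d ord0 i ^+ 2 = 1.

Definition closed_in (X A : set E) : Prop := exists F : set E, closed F /\ A = X `&` F.

Definition A1 f Phi (X : set E) (U : set 'rV[R]_m) : Prop :=
  {within X `*` U, continuous (fun p : E * 'rV[R]_m => f p.1 p.2)} /\
  forall u, U u -> exists (alpha : R) (C : set E), compact C /\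
    \forall u' \near u,
      [set x | Phi u' x /\ f x u' <= alpha] !=set0 /\
      [set x | Phi u' x /\ f x u' <= alpha] `<=` C.

Definition A2 f Phi (u0 d : 'rV[R]_m) : Prop :=
  (forall x, Phi u0 x -> dirder_ex f x u0 d) /\
  (-oo < ereal_inf [set (dirder f x u0 d)%:E | x in solset f Phi u0])%E.

Definition A3 f Phi (X : set E) (u0 d : 'rV[R]_m) : Prop :=
  forall (xk : nat -> E) (x : E), (forall k, Phi u0 (xk k)) -> X x ->
    xk @ \oo --> x ->
    ((dirder f x u0 d)%:E <= limn_esup (fun k => (dirder f (xk k) u0 d)%:E))%E.

Definition condB f Phi (X : set E) (U : set 'rV[R]_m) (u0 : 'rV[R]_m) : Prop :=
  (exists Phi0 : set E, Phi0 !=set0 /\ Phi0 `<=` X /\ closed_in X Phi0 /\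
     forall u, U u -> Phi u = Phi0) \/
  (exists (Z : topologicalLmodType R) (G : E -> 'rV[R]_m -> Z) (K : set Z),
     {within X `*` U, continuous (fun p : E * 'rV[R]_m => G p.1 p.2)} /\
     closed K /\ (K^°) !=set0 /\
     (forall u, U u -> Phi u = [set x | X x /\ K (G x u)]) /\
     (forall x, solset f Phi u0 x -> (K^°) (G x u0))).
End Defs.

From HB Require Import structures.
From mathcomp Require Import all_boot all_order all_algebra.
From mathcomp Require Import all_classical all_reals all_analysis.
Import Order.TTheory GRing.Theory Num.Theory.
Import numFieldNormedType.Exports.
Local Open Scope classical_set_scope.
Local Open Scope ring_scope.

(* Let x be a solution at u0.  Condition (B) guarantees that x
   stays feasible, x ∈ Φ(u), for all u near u0 (either Φ is constant, or the
   constraint G(x,u0) ∈ int K persists by continuity of G).  Hence near u0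
     v(u) <= f(x,u)   with equality at u = u0,
   i.e. the function f_x - v has a local minimum at u0.  At a local minimum
   of a function differentiable there, the differential is nonnegative in
   every direction h and in direction -h, hence zero; so ∇v(u0) = ∇f_x(u0).
   Finally a directional derivative of a differentiable function is the
   differential applied to the direction, so D_d f_x(u0) = ∇v(u0)·d does not
   depend on the solution x. *)

Section Calculus.
Variables (R : realType) (V : normedModType R).

Lemma diffquot_cvg_differential (F : V -> R) (u d : V) :
  differentiable F u ->
  (fun s : R => (F (u + s *: d) - F u) / s) @ 0^'+ --> 'd F u d.
Proof.
move=> dF; rewrite -deriveE //.
have -> : (fun s : R => (F (u + s *: d) - F u) / s) =
          (fun s : R => s^-1 *: ((F \o shift u) (s *: d) - F u)).
  by apply/funext => s; rewrite [u + _]addrC mulrC.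
have dF_d : derivable F u d := diff_derivable dF.
apply: cvg_trans (cvgP _ dF_d); apply: cvg_app.
move=> A [e e_gt0 eA]; exists e => // s se s_gt0.
by apply: eA => //; exact: lt0r_neq0.
Qed.

(* At a local minimum the differential is nonnegative in every direction:
   the difference quotients along h are eventually nonnegative. *)
Lemma differential_ge0_at_min (g : V -> R) (u : V) :
  differentiable g u -> (\forall w \near u, g u <= g w) ->
  forall h, 0 <= 'd g u h.
Proof.
move=> dg gmin h.
have line_cvg : (fun s : R => u + s *: h) @ 0 --> u.
  rewrite -[X in _ --> X]addr0 -(scale0r h).
  by apply: cvgD; [exact: cvg_cst | exact: cvgZr_tmp cvg_id].
have gmin_line : \forall s \near (0 : R), g u <= g (u + s *: h) :=
  line_cvg _ gmin.
have dq := diffquot_cvg_differential g u h dg.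
rewrite -(cvg_lim _ dq) //; apply: limr_ge; first exact: cvgP dq.
apply: filterS gmin_line => s gs s_gt0.
by rewrite divr_ge0 ?subr_ge0 // ltW.
Qed.

Lemma linear_ext (L1 L2 : {linear V -> R}) : L1 =1 L2 -> L1 = L2.
Proof.
move: L1 L2 => [f1 [c1 d1]] [f2 [c2 d2]] /= L12.
have ef := funext L12; subst.
case: c1 c2 => [a1] [a2]; case: d1 d2 => [b1] [b2].
by rewrite (Prop_irrelevance a1 a2) (Prop_irrelevance b1 b2).
Qed.

(* If g lies above v near u and touches it at u, and both are
   differentiable at u, they have the same differential there:
   g - v has a local minimum at u, so its differential vanishes. *)
Lemma differential_touching_above (g v : V -> R) (u : V) :
  differentiable g u -> differentiable v u ->
  g u = v u -> (\forall w \near u, v w <= g w) ->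
  'd v u = 'd g u.
Proof.
move=> dg dv guv vg.
have dgv : differentiable (g \- v) u := differentiableB dg dv.
have gv_min : \forall w \near u, (g \- v) u <= (g \- v) w.
  by apply: filterS vg => w vgw /=; rewrite guv subrr subr_ge0.
have gv_d0 h : 'd (g \- v) u h = 0.
  apply/eqP; rewrite eq_le differential_ge0_at_min // andbT.
  by rewrite -oppr_ge0 -linearN differential_ge0_at_min.
apply: linear_ext => h; apply/eqP; rewrite eq_sym -subr_eq0; apply/eqP.
by rewrite -(gv_d0 h) diffB.
Qed.

End Calculus.

Section ParametricProblem.
Context {R : realType} {E : completeNormedModType R} {m : nat}.
Context {X : set E} {U : set 'rV[R]_m} {f : E -> 'rV[R]_m -> R}.
Context {Phi : 'rV[R]_m -> set E} {u0 : 'rV[R]_m}.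

Lemma optval_le_feasible (u : 'rV[R]_m) (x : E) :
  Phi u x -> (optval f Phi u <= (f x u)%:E)%E.
Proof. by move=> Px; apply: ereal_inf_lbound; exists x. Qed.

(* Under (B), a solution at u0 remains feasible for all parameters near u0:
   either Φ is constant on U, or G(x,u) stays in K by continuity of G since
   G(x,u0) lies in the interior of K. *)
Lemma solution_feasible_near {x : E} :
  open U -> U u0 -> (forall u, U u -> Phi u `<=` X) ->
  condB f Phi X U u0 -> solset f Phi u0 x ->
  \forall u \near u0, Phi u x.
Proof.
move=> U_open Uu0 PhiX hB Sx.
have nU : nbhs u0 U by exact: U_open.
have Xx : X x := PhiX u0 Uu0 x Sx.1.
case: hB => [[Phi0 [_ [_ [_ Phi_cst]]]]|[Z [G [K [Gc [_ [_ [PhiG GintK]]]]]]]].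
  by apply: filterS nU => u Uu; rewrite Phi_cst // -(Phi_cst u0 Uu0); case: Sx.
have nK : nbhs (G x u0) K by exact: GintK.
have := (subspace_continuousP _ _).1 Gc (x, u0) (conj Xx Uu0) _ nK.
rewrite /= nbhs_simpl /within /= => -[[A B] /= [nA nB] ABK].
apply: filterS (filterI nB nU) => u [Bu Uu]; rewrite PhiG //; split=> //.
exact: (ABK (x, u) (conj (nbhs_singleton nA) Bu) (conj Xx Uu)).
Qed.

Lemma dirder_differential {x : E} {u : 'rV[R]_m} (d : 'rV[R]_m) :
  differentiable (f x) u -> dirder f x u d = 'd (f x) u d.
Proof.
by move=> dfx; apply: cvg_lim => //; exact: diffquot_cvg_differential.
Qed.

End ParametricProblem.

Theorem mainTheorem4 (R : realType) (E : completeNormedModType R) (m : nat)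
    (X : set E) (U : set 'rV[R]_m) (f : E -> 'rV[R]_m -> R)
    (Phi : 'rV[R]_m -> set E) (u0 : 'rV[R]_m) :
  X !=set0 -> open U -> U u0 ->
  (forall u, U u -> Phi u `<=` X) ->
  A1 f Phi X U ->
  condB f Phi X U u0 ->
  (forall d, unit_dir d -> A2 f Phi u0 d /\ A3 f Phi X u0 d) ->
  forall v : 'rV[R]_m -> R,
  (\forall u \near u0, optval f Phi u = (v u)%:E) ->
  differentiable v u0 ->
  (forall x, solset f Phi u0 x -> differentiable (f x) u0) ->
  (forall d, unit_dir d -> forall x y, solset f Phi u0 x -> solset f Phi u0 y ->
     dirder f x u0 d = dirder f y u0 d) /\
  (forall x, solset f Phi u0 x -> 'd v u0 = 'd (f x) u0).
Proof.
move=> _ U_open Uu0 PhiX _ hB _ v v_val dv dfx.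
have grad x : solset f Phi u0 x -> 'd v u0 = 'd (f x) u0.
  move=> Sx; apply: differential_touching_above; [exact: dfx | exact: dv | |].
    have [_ fx_opt] := Sx.
    by have := nbhs_singleton v_val; rewrite -fx_opt => -[].
  apply: filterS (filterI v_val (solution_feasible_near U_open Uu0 PhiX hB Sx)).
  by move=> u [vu Pu]; rewrite -lee_fin -vu optval_le_feasible.
split=> [d _ x y Sx Sy|//].
rewrite (dirder_differential d (dfx x Sx)) (dirder_differential d (dfx y Sy)).
by rewrite -(grad x Sx) -(grad y Sy).
Qed.
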